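(* If a real symmetric matrix has symmetric tropical rank two, then it has tropical rank two.
   Context: For an $r\times r$ submatrix of a real matrix $A$ with row index set $I$ and column index set $J$, each bijection $\rho:I\to J$ has value $\sum_{i\in I}A_{i,\rho(i)}$; the submatrix is tropically singular if the minimum value is attained by at least two distinct bijections. For symmetric $A$, the submatrix is symmetrically tropically singular if the minimum is attained by at least two distinct monomials $\prod_{i\in I}X_{i,\rho(i)}$, where variables are subject to the identification $X_{i,j}=X_{j,i}$. The tropical rank (resp. symmetric tropical rank) of $A$ is the largest $r$ such that $A$ has an $r\times r$ submatrix (arbitrary row and column sets) that is not tropically singular (resp. not symmetrically tropically singular). *)

From HB Require Import structures.
From mathcomp Require Import all_boot all_order all_algebra.
From mathcomp Require Export reals.
Set Implicit Arguments. Unset Strict Implicit. Unset Printing Implicit Defensive.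
Import Order.TTheory GRing.Theory Num.Theory.
Local Open Scope ring_scope.

Section Trop.
Variables (R : realType) (m n : nat).
Implicit Types (A : 'M[R]_(m, n)) (I : {set 'I_m}) (J : {set 'I_n})
  (f g h : 'I_m -> 'I_n).

Definition is_bij I J f : Prop := {in I &, injective f} /\ f @: I = J.

Definition bij_val A I f : R := \sum_(i in I) A i (f i).

Definition is_min A I J f : Prop :=
  is_bij I J f /\ forall h, is_bij I J h -> bij_val A I f <= bij_val A I h.

Definition trop_singular A I J : Prop :=
  exists f g, [/\ is_min A I J f, is_min A I J g &
                  exists2 i, i \in I & f i != g i].

Definition is_trop_rank A (r : nat) : Prop :=
  (exists I J, [/\ #|I| = r, #|J| = r & ~ trop_singular A I J]) /\
  (forall I J, #|I| = #|J| -> (r < #|I|)%N -> trop_singular A I J).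
End Trop.

Section SymTrop.
Variables (R : realType) (n : nat).
Implicit Types (A : 'M[R]_n) (I J : {set 'I_n}) (f g : 'I_n -> 'I_n).

(* exponent of the variable X_{a,b} = X_{b,a} in prod_{i in I} X_{i, f i} *)
Definition sym_exp I f (a b : 'I_n) : nat :=
  #|[set i in I | ((i == a) && (f i == b)) || ((i == b) && (f i == a))]|.

Definition same_sym_monomial I f g : Prop :=
  forall a b, sym_exp I f a b = sym_exp I g a b.

Definition sym_trop_singular A I J : Prop :=
  exists f g, [/\ is_min A I J f, is_min A I J g & ~ same_sym_monomial I f g].

Definition is_sym_trop_rank A (r : nat) : Prop :=
  (exists I J, [/\ #|I| = r, #|J| = r & ~ sym_trop_singular A I J]) /\
  (forall I J, #|I| = #|J| -> (r < #|I|)%N -> sym_trop_singular A I J).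
End SymTrop.

(* A symmetrically tropically singular submatrix is tropically singular, since
   bijections giving distinct symmetric monomials are distinct.  Conversely, for
   a 2x2 submatrix two bijections f, g that disagree at a row i cannot give the
   same symmetric monomial: the variable X_{i, f i} would have to come from g at
   row f i, forcing f i = j and g j = i for the other row j, and symmetrically
   g i = j, contradicting f i <> g i.  Hence both notions of singularity agree on
   2x2 submatrices and are comparable on larger ones, so symmetric tropical rank
   two implies tropical rank two. *)
From mathcomp Require Import all_boot all_order all_algebra.
Set Implicit Arguments. Unset Strict Implicit. Unset Printing Implicit Defensive.
Import Order.TTheory GRing.Theory Num.Theory.

Section SymMonomial.
Variables (n : nat) (I : {set 'I_n}).
Implicit Types f g : 'I_n -> 'I_n.

Lemma same_sym_monomial_sym f g :
  same_sym_monomial I f g -> same_sym_monomial I g f.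
Proof. by move=> fg a b; rewrite fg. Qed.

Lemma eq_in_same_sym_monomial f g :
  {in I, f =1 g} -> same_sym_monomial I f g.
Proof.
move=> fg a b; apply: eq_card => i; rewrite !inE.
by case iI: (i \in I) => //=; rewrite fg.
Qed.

Lemma same_sym_monomial_swap f g i :
  same_sym_monomial I f g -> i \in I -> f i != g i ->
  f i \in I /\ g (f i) = i.
Proof.
move=> fg iI fgi.
have : (0 < sym_exp I f i (f i))%N.
  by rewrite card_gt0; apply/set0Pn; exists i; rewrite !inE iI !eqxx.
rewrite fg card_gt0 => /set0Pn[k]; rewrite !inE => /andP[kI].
case/orP=> /andP[/eqP ki /eqP gk]; subst k; first by rewrite gk eqxx in fgi.
by split.
Qed.

Lemma setD1_card2_eq x y i :
  #|I| = 2 -> i \in I -> x \in I :\ i -> y \in I :\ i -> x = y.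
Proof.
move=> I2 iI; have /cards1P[z ->] : #|I :\ i| == 1.
  by move: I2; rewrite (cardsD1 i I) iI add1n => -[->].
by rewrite !inE => /eqP-> /eqP->.
Qed.

Lemma same_sym_monomial_card2 f g :
  #|I| = 2 -> same_sym_monomial I f g -> {in I, f =1 g}.
Proof.
move=> I2 fg i iI; apply/eqP/negPn/negP => fgi.
have [fiI gfi] := same_sym_monomial_swap fg iI fgi.
have gfi_neq : g i != f i by rewrite eq_sym.
have [giI fgi'] := same_sym_monomial_swap (same_sym_monomial_sym fg) iI gfi_neq.
have fiD : f i \in I :\ i.
  by rewrite !inE fiI andbT; apply/eqP => fii; move: fgi; rewrite -{2}fii gfi fii eqxx.
have giD : g i \in I :\ i.
  by rewrite !inE giI andbT; apply/eqP => gii; move: fgi; rewrite -{1}gii fgi' gii eqxx.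
by rewrite (setD1_card2_eq I2 iI fiD giD) eqxx in fgi.
Qed.

End SymMonomial.

Section Singularity.
Variables (R : realType) (n : nat) (A : 'M[R]_n).
Implicit Types I J : {set 'I_n}.

Lemma sym_trop_singular_trop_singular I J :
  sym_trop_singular A I J -> trop_singular A I J.
Proof.
case=> f [g [fmin gmin fg]]; exists f, g; split=> //.
have [/exists_inP[i iI fgi] | /exists_inPn fg_eq] := boolP [exists i in I, f i != g i].
  by exists i.
by case: fg; apply: eq_in_same_sym_monomial => i /fg_eq /negPn/eqP.
Qed.

Lemma trop_singular_card2_sym I J :
  #|I| = 2 -> trop_singular A I J -> sym_trop_singular A I J.
Proof.
move=> I2 [f [g [fmin gmin [i iI fgi]]]]; exists f, g; split=> // fg.
by rewrite (same_sym_monomial_card2 I2 fg iI) eqxx in fgi.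
Qed.

End Singularity.

Theorem corollary1 (R : realType) (n : nat) (A : 'M[R]_n) :
  (A^T)%R = A -> is_sym_trop_rank A 2 -> is_trop_rank A 2.
Proof.
(* The argument never uses the symmetry of A. *)
move=> _ [[I [J [I2 J2 nonsing]]] sing_big]; split.
  exists I, J; split=> //; apply: contra_not nonsing.
  exact: trop_singular_card2_sym.
by move=> I' J' IJ lt; apply/sym_trop_singular_trop_singular/sing_big.
Qed.
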